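(* Let $n \ge m \ge r \ge 2$ be integers, $\delta\in[0,1/m]$ a real number, and $F$ an $m$-vertex $r$-graph. Suppose $t$ is a positive integer with $$t \le \min\left\{\frac{\delta m n}{r-1} - r,\ \frac{n}{m}\right\}.$$ Then every $n$-vertex $r$-graph $\mathcal{H}$ that does not contain $t+1$ pairwise vertex-disjoint copies of $F$ and satisfies $\Delta(\mathcal{H}) \le (1/m - \delta)\binom{n-1}{r-1}$ has $$|\mathcal{H}| \le \binom{n}{r} - \binom{n-t}{r} + \mathrm{ex}(n-t,F).$$
   Context: An $r$-graph is a set of $r$-element subsets (edges) of a finite vertex set; $|\mathcal{H}|$ is its number of edges and $\Delta(\mathcal{H})$ its maximum degree. $\mathrm{ex}(n,F)$ is the maximum number of edges in an $n$-vertex $r$-graph with no copy of $F$. *)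

From mathcomp Require Import all_boot all_order all_algebra.
Set Implicit Arguments. Unset Strict Implicit. Unset Printing Implicit Defensive.

Definition hypergraph (n : nat) := {set {set 'I_n}}.

Definition uniform (n r : nat) (H : hypergraph n) : bool :=
  [forall e in H, #|e| == r].

Definition deg (n : nat) (H : hypergraph n) (v : 'I_n) : nat :=
  #|[set e in H | v \in e]|.
Definition maxdeg (n : nat) (H : hypergraph n) : nat :=
  \max_(v : 'I_n) deg H v.

(* phi : 'I_m -> 'I_n embeds a (not necessarily induced) copy of F into H:
   phi is injective and maps every edge of F onto an edge of H. *)
Definition is_copy (m n : nat) (F : hypergraph m) (H : hypergraph n)
  (phi : {ffun 'I_m -> 'I_n}) : bool :=
  injectiveb phi && [forall e in F, phi @: e \in H].

Definition contains (m n : nat) (F : hypergraph m) (H : hypergraph n) : bool :=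
  [exists phi : {ffun 'I_m -> 'I_n}, is_copy F H phi].

Definition has_disjoint_copies (k m n : nat) (F : hypergraph m)
  (H : hypergraph n) : Prop :=
  exists phi : 'I_k -> {ffun 'I_m -> 'I_n},
    (forall i, is_copy F H (phi i)) /\
    (forall i j, i != j -> [disjoint codom (phi i) & codom (phi j)]).

Definition ex (r N m : nat) (F : hypergraph m) : nat :=
  \max_(H : hypergraph N | uniform r H && ~~ contains F H) #|H|.

From mathcomp Require Import all_boot all_order all_algebra.
From mathcomp Require Import zify ring lra.
From Stdlib Require Import ClassicalEpsilon.
Import Order.TTheory GRing.Theory Num.Theory.

Set Implicit Arguments.
Unset Strict Implicit.
Unset Printing Implicit Defensive.

(* Take a maximal family of vertex-disjoint copies of F: it has at most t
   members, and its vertex set U, of size at most tm, meets every copy of F.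
   The degree hypothesis is exactly what gives m Delta <= C(n-t, r-1).
   If fewer than m vertices lie outside U, then n < (t+1)m and double counting
   gives |H| <= n Delta / r <= C(n,r) / m <= C(n,r) - C(n-t,r).
   Otherwise enlarge U to a set X of size max(|U|, t) containing a t-set W.
   At most |U| Delta edges meet U, at most C(n-|U|,r) - C(n-|X|,r) edges avoid U
   but meet X, and these two numbers add up to at most C(n,r) - C(n-t,r).
   The edges outside X form an F-free graph on the n - t vertices outside W:
   a copy of F there could be moved off U (only isolated vertices of F can
   leave the edges, and there is room outside U), contradicting maximality.
   Hence they number at most ex(n-t, F). *)

Lemma bin_sub_sum N a j : a <= N ->
  'C(N, j.+1) = 'C(N - a, j.+1) + \sum_(i < a) 'C(N - i.+1, j).
Proof.
elim: a => [|a IHa] leaN; first by rewrite subn0 big_ord0 addn0.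
rewrite IHa ?(ltnW leaN) // big_ord_recr /=.
have -> : N - a = (N - a.+1).+1 by lia.
by rewrite binS; lia.
Qed.

Lemma bin_sub_mul_le n s j : s <= n -> 'C(n - s, j.+1) + s * 'C(n - s, j) <= 'C(n, j.+1).
Proof.
move=> lesn; rewrite (bin_sub_sum j lesn) leq_add2l.
rewrite -[s in s * _]card_ord -sum_nat_const.
by apply: leq_sum => i _; apply: leq_bin2l; rewrite leq_sub2l.
Qed.

Lemma bin_le_sub_mul n a j : a <= n -> 'C(n, j.+1) <= 'C(n - a, j.+1) + a * 'C(n.-1, j).
Proof.
move=> lean; rewrite (bin_sub_sum j lean) leq_add2l.
rewrite -[a in a * _]card_ord -sum_nat_const.
by apply: leq_sum => i _; apply: leq_bin2l; rewrite -subn1 leq_sub2l.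
Qed.

Lemma mul_bin_diag2 n j : n * n.-1 * 'C(n.-2, j) = j.+2 * j.+1 * 'C(n, j.+2).
Proof. by rewrite -mulnA mul_bin_diag mulnCA mul_bin_diag mulnA [j.+2 * _]mulnC. Qed.

Lemma falling2_sub_le n m t : 1 < m -> 0 < t -> t * m <= n -> n < t * m + m ->
  m * ((n - t) * (n - t).-1) <= m.-1 * (n * n.-1).
Proof.
case: m => [|[|M]] // _; case: t => // t _ le_tm_n lt_n_tm.
have [s -> lt_s_M] : exists2 s, n = t.+1 * M.+2 + s & s < M.+2 by exists (n - t.+1 * M.+2); lia.
set B := t * M.+1 + M + s.
have [-> -> ->] : [/\ t.+1 * M.+2 + s - t.+1 = B.+1, t.+1 * M.+2 + s = B + t.+2
                    & (B + t.+2).-1 = B + t.+1].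
  by rewrite /B; split; [lia | ring | by rewrite addnS].
have E : M.+1 * ((B + t.+2) * (B + t.+1)) + s * s =
         M.+2 * (B.+1 * B) + (t.+1 ^ 2 * M.+1 * M.+2 + s) by rewrite /B; ring.
rewrite -(leq_add2r (s * s)) /= E leq_add2l.
apply: leq_trans (leq_addr _ _); apply: (@leq_trans (M.+1 * M.+2)).
  by apply: leq_mul; lia.
by rewrite -mulnA leq_pmull ?expn_gt0.
Qed.

Lemma bin_ratio_le n m t r : 1 < r -> 1 < m -> 0 < t -> t * m <= n -> n < t * m + m ->
  m * 'C(n - t, r) <= m.-1 * 'C(n, r).
Proof.
case: r => [|[|j]] // _ m_gt1 t_gt0 le_tm_n lt_n_tm.
rewrite -(@leq_pmul2l (j.+2 * j.+1)) // mulnCA.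
rewrite -(mul_bin_diag2 (n - t) j) [X in _ <= X]mulnCA -(mul_bin_diag2 n j).
rewrite mulnA [X in _ <= X]mulnA.
apply: leq_mul; first exact: falling2_sub_le.
by apply: leq_bin2l; rewrite -!subn2 leq_sub2r ?leq_subr.
Qed.

Section DegreeBound.

Local Open Scope ring_scope.

Lemma mul_maxdeg_le_bin (R : realFieldType) n m r t (delta : R) D :
  (1 < r)%N -> (0 < m)%N -> (0 < t)%N -> (t <= n)%N ->
  0 <= delta -> delta <= 1 / m%:R ->
  t%:R <= delta * m%:R * n%:R / (r.-1)%:R - r%:R ->
  D%:R <= (1 / m%:R - delta) * ('C(n.-1, r.-1))%:R ->
  (m * D <= 'C(n - t, r.-1))%N.
Proof.
(* With r = j+2, t = a+1, n = N+1 and c = delta m: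
   C(N, j+1) - C(N-a, j+1) <= a C(N-1, j) = a (j+1) / N C(N, j+1) <= c C(N, j+1). *)
case: r => [|[|j]] // _ m_gt0; case: t => // a _; case: n => // N le_aN.
rewrite ltnS in le_aN; rewrite subSS /= => delta_ge0 delta_le t_le D_le.
have m_gt0R : (0 : R) < m%:R by rewrite ltr0n.
set c := delta * m%:R in t_le.
have c_le1 : c <= 1 by rewrite /c -ler_pdivlMr // mul1r.
have c_ge0 : 0 <= c by rewrite mulr_ge0 // ltW.
have a_le : (a * j.+1)%:R <= c * N%:R.
  move: t_le; rewrite lerBrDr ler_pdivlMr ?ltr0n // natrM -!natr1.
  have : (0 : R) <= j%:R by rewrite ler0n.
  nra.
set C := ('C(N, j.+1))%:R : R.
have tail : (a * 'C(N.-1, j))%:R <= c * C.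
  case: N le_aN a_le {t_le D_le} @C => [|N] le_aN a_le C.
    by move: le_aN; rewrite leqn0 => /eqP ->; rewrite mul0n mulr_ge0 ?ler0n.
  rewrite -(@ler_pM2l _ N.+1%:R) ?ltr0n // -natrM mulnCA mul_bin_diag natrM mulnC natrM.
  have : 0 <= C by rewrite ler0n.
  rewrite natrM in a_le; nra.
have mD : (m * D)%:R <= (1 - c) * C.
  have -> : (1 - c) * C = m%:R * ((1 / m%:R - delta) * C).
    by rewrite /c; field; rewrite gt_eqF.
  by rewrite natrM ler_wpM2l // ltW.
rewrite -(ler_nat R); apply: le_trans mD _.
have := bin_le_sub_mul j le_aN; rewrite -(ler_nat R) natrD -/C.
lra.
Qed.

End DegreeBound.

Lemma leq_card_bigcup (I T : finType) (P : pred I) (A : I -> {set T}) :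
  #|\bigcup_(i | P i) A i| <= \sum_(i | P i) #|A i|.
Proof.
elim/big_rec2: _ => [|i B k _ le_Bk]; first by rewrite cards0.
by apply: leq_trans (leq_card_setU _ _) _; rewrite leq_add2l.
Qed.

Lemma exists_subset (T : finType) (A : {set T}) k :
  k <= #|A| -> exists2 B : {set T}, B \subset A & #|B| = k.
Proof.
move=> le_kA; have : 0 < #|[set B : {set T} | B \subset A & #|B| == k]|.
  by rewrite cards_draws bin_gt0.
by case/card_gt0P => B; rewrite inE => /andP[sBA /eqP cardB]; exists B.
Qed.

Lemma exists_superset (T : finType) (A : {set T}) k :
  #|A| <= k <= #|T| -> exists2 B : {set T}, A \subset B & #|B| = k.
Proof.
case/andP=> le_Ak le_kT.
have [C sCA cardC] : exists2 C : {set T}, C \subset ~: A & #|C| = k - #|A|.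
  by apply: exists_subset; have := cardsC A; lia.
exists (A :|: C); first exact: subsetUl.
rewrite cardsU cardC (_ : A :&: C = set0) ?cards0; first by lia.
by apply/disjoint_setI0; rewrite disjoint_sym -[A]setCK -subsets_disjoint.
Qed.

Section Hypergraphs.

Variables (n r : nat) (H : hypergraph n).

Lemma sum_deg : uniform r H -> \sum_(v : 'I_n) deg H v = r * #|H|.
Proof.
move=> /forallP unifH.
have degE v : deg H v = \sum_(e in H) (v \in e).
  rewrite /deg -sum1_card big_mkcond [RHS]big_mkcond; apply: eq_bigr => e _.
  by rewrite inE; case: (e \in H); case: (v \in e).
under eq_bigr do rewrite degE.
rewrite exchange_big mulnC -sum_nat_const; apply: eq_bigr => e eH.
by rewrite -(eqP (implyP (unifH e) eH)) -sum1_card [RHS]big_mkcond.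
Qed.

Lemma uniformS (G : hypergraph n) : G \subset H -> uniform r H -> uniform r G.
Proof.
move=> sGH /forallP unifH; apply/forallP => e; apply/implyP => eG.
exact: implyP (unifH e) (subsetP sGH e eG).
Qed.

Lemma mul_card_le_maxdeg : uniform r H -> r * #|H| <= n * maxdeg H.
Proof.
move/sum_deg <-; rewrite -[n in n * _]card_ord -sum_nat_const.
by apply: leq_sum => v _; apply: leq_bigmax.
Qed.

Lemma card_edges_split (U X : {set 'I_n}) :
  #|H| <= #|[set e in H | ~~ (e \subset ~: U)]|
          + #|[set e in H | (e \subset ~: U) && ~~ (e \subset ~: X)]|
          + #|[set e in H | e \subset ~: X]|.
Proof.
set H1 := [set e in H | _]; set H2 := [set e in H | _]; set H3 := [set e in H | _].
apply: (@leq_trans #|H1 :|: H2 :|: H3|).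
  apply: subset_leq_card; apply/subsetP => e eH.
  by rewrite !inE eH; case: (e \subset ~: U); case: (e \subset ~: X).
apply: leq_trans (leq_card_setU _ _) _; rewrite leq_add2r.
exact: leq_card_setU.
Qed.

Lemma card_edges_meeting_le (U : {set 'I_n}) :
  #|[set e in H | ~~ (e \subset ~: U)]| <= #|U| * maxdeg H.
Proof.
have sub : [set e in H | ~~ (e \subset ~: U)] \subset \bigcup_(v in U) [set e in H | v \in e].
  apply/subsetP => e; rewrite inE => /andP[eH /subsetPn[v ve]].
  by rewrite inE negbK => vU; apply/bigcupP; exists v; rewrite // inE eH.
apply: leq_trans (subset_leq_card sub) _; apply: leq_trans (leq_card_bigcup _ _) _.
by rewrite -sum_nat_const; apply: leq_sum => v _; apply: leq_bigmax.
Qed.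

Lemma card_edges_between_le (U X : {set 'I_n}) : uniform r H -> U \subset X ->
  #|[set e in H | (e \subset ~: U) && ~~ (e \subset ~: X)]|
    <= 'C(n - #|U|, r) - 'C(n - #|X|, r).
Proof.
move=> /forallP unifH sUX.
have sub : [set e in H | (e \subset ~: U) && ~~ (e \subset ~: X)] \subset
    [set A : {set 'I_n} | A \subset ~: U & #|A| == r]
      :\: [set A : {set 'I_n} | A \subset ~: X & #|A| == r].
  apply/subsetP => e; rewrite !inE => /andP[eH /andP[-> /negbTE ->]].
  by rewrite (implyP (unifH e) eH).
apply: leq_trans (subset_leq_card sub) _.
rewrite cardsDS ?cards_draws.
  by rewrite [#|~: U|]cardsCs [#|~: X|]cardsCs !setCK card_ord.
apply/subsetP => A; rewrite !inE => /andP[sAX ->]; rewrite andbT.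
by apply: subset_trans sAX _; rewrite setCS.
Qed.

End Hypergraphs.

Section Copies.

Variables (m n : nat) (F : hypergraph m).

Lemma is_copyS (G H : hypergraph n) psi : G \subset H -> is_copy F G psi -> is_copy F H psi.
Proof.
move=> sGH /andP[inj_psi /forallP copyE]; rewrite /is_copy inj_psi /=.
by apply/forallP => e; apply/implyP => eF; apply: subsetP sGH _ (implyP (copyE e) eF).
Qed.

Lemma is_copy_update (G : hypergraph n) psi x y :
  is_copy F G psi -> (forall e, e \in F -> x \notin e) -> y \notin codom psi ->
  is_copy F G [ffun z => if z == x then y else psi z].
Proof.
move=> /andP[/injectiveP inj_psi /forallP copyE] x_isolated y_new; apply/andP; split.
  apply/injectiveP => z1 z2; rewrite !ffunE.
  have psi_ne z : psi z != y by apply: contraNneq y_new => <-; exact: codom_f.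
  case: eqP => [->|_]; case: eqP => [->|_] //; last exact: inj_psi.
    by move/esym/eqP; rewrite (negbTE (psi_ne _)).
  by move/eqP; rewrite (negbTE (psi_ne _)).
apply/forallP => e; apply/implyP => eF; rewrite (eq_in_imset (g := psi)) ?(implyP (copyE e) eF) //.
by move=> z ze; rewrite ffunE; case: eqP => // zx; move: (x_isolated e eF); rewrite -zx ze.
Qed.

Lemma copy_inside (G : hypergraph n) (Y : {set 'I_n}) :
  (forall e, e \in G -> e \subset Y) -> m <= #|Y| -> forall psi, is_copy F G psi ->
  exists2 psi', is_copy F G psi' & forall x, psi' x \in Y.
Proof.
(* A vertex mapped outside Y lies in no edge of F, so it can be remapped to a
   vertex of Y not yet used; induct on the number of such vertices. *)
move=> sGY le_mY psi; have [k] := ubnP #|[set x | psi x \notin Y]|.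
elim: k psi => // k IHk psi lt_out copy_psi.
have [out0 | [x]] := set_0Vmem [set x | psi x \notin Y].
  by exists psi => // z; move/setP/(_ z): out0; rewrite !inE => /negbFE.
rewrite inE => x_out; move: (copy_psi) => /andP[/injectiveP inj_psi /forallP copyE].
have x_isolated e : e \in F -> x \notin e.
  move=> eF; apply: contra x_out => xe.
  exact: subsetP (sGY _ (implyP (copyE e) eF)) _ (imset_f psi xe).
have [y] : exists y, y \in Y :\: [set z in codom psi].
  apply/set0Pn; rewrite -card_gt0 cardsD.
  suff : #|Y :&: [set z in codom psi]| < m by lia.
  apply: (@leq_ltn_trans #|[set z in codom psi] :\ psi x|).
    apply/subset_leq_card/subsetP => z; rewrite !inE => /andP[zY ->]; rewrite andbT.
    by apply: contraNneq x_out => <-.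
  have := cardsD1 (psi x) [set z in codom psi].
  by rewrite inE codom_f cardsE card_codom // card_ord; lia.
rewrite !inE => /andP[y_new yY].
have copy_psi' := is_copy_update copy_psi x_isolated y_new.
apply: IHk copy_psi'; rewrite -ltnS; apply: leq_trans lt_out; apply: proper_card.
apply/properP; split; last by exists x; rewrite !inE ?ffunE ?eqxx ?yY.
by apply/subsetP => z; rewrite !inE ffunE; case: eqP => [->|].
Qed.

Lemma card_le_ex_of_inj r N (G : hypergraph n) (g : 'I_N -> 'I_n) : injective g ->
  uniform r G -> (forall e, e \in G -> e \subset g @: setT) ->
  (forall psi, ~~ is_copy F G psi) -> #|G| <= ex r N F.
Proof.
move=> g_inj /forallP unifG sG no_copy.
have gK e : e \in G -> g @: (g @^-1: e) = e.
  move=> eG; apply/setP => y; apply/imsetP/idP => [[x] | ye]; first by rewrite inE => ? ->.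
  by have /imsetP[x _ yE] := subsetP (sG e eG) y ye; exists x; rewrite // inE -yE.
pose G' : hypergraph N := [set g @^-1: e | e : {set 'I_n} in G].
have -> : #|G| = #|G'|.
  apply/esym/card_in_imset => e1 e2 e1G e2G eq12.
  by rewrite -(gK e1 e1G) -(gK e2 e2G) eq12.
apply: (@leq_bigmax_cond _ (fun K => uniform r K && ~~ contains F K) (fun K => #|K|)).
apply/andP; split.
  apply/forallP => e'; apply/implyP => /imsetP[e eG ->].
  by rewrite -(card_imset _ g_inj) gK // (implyP (unifG e) eG).
apply/negP => /existsP[phi /andP[/injectiveP inj_phi /forallP copyE]].
move/negP: (no_copy [ffun x => g (phi x)]); apply; apply/andP; split.
  by apply/injectiveP => x y; rewrite !ffunE => /g_inj/inj_phi.
apply/forallP => e; apply/implyP => eF.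
have -> : [ffun x => g (phi x)] @: e = g @: (phi @: e).
  by rewrite -imset_comp; apply: eq_imset => x; rewrite ffunE.
by have /imsetP[e' e'G ->] := implyP (copyE e) eF; rewrite gK.
Qed.

Lemma card_le_ex r N (G : hypergraph n) (Y : {set 'I_n}) : #|Y| = N ->
  uniform r G -> (forall e, e \in G -> e \subset Y) ->
  (forall psi, ~~ is_copy F G psi) -> #|G| <= ex r N F.
Proof.
move=> cardY unifG sGY; pose g i := enum_val (cast_ord (esym cardY) i).
have g_inj : injective g by move=> i j /enum_val_inj/cast_ord_inj.
have imgY : g @: setT = Y.
  apply/eqP; rewrite eqEcard card_imset // cardsT card_ord cardY leqnn andbT.
  by apply/subsetP => y /imsetP[i _ ->]; apply: enum_valP.
by apply: (card_le_ex_of_inj g_inj unifG); rewrite imgY.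
Qed.

End Copies.

Section Packings.

Variables (m n : nat) (F : hypergraph m) (H : hypergraph n).

Definition packing k (phi : 'I_k -> {ffun 'I_m -> 'I_n}) : Prop :=
  (forall i, is_copy F H (phi i)) /\
  (forall i j, i != j -> [disjoint codom (phi i) & codom (phi j)]).

Definition packing_support k (phi : 'I_k -> {ffun 'I_m -> 'I_n}) : {set 'I_n} :=
  \bigcup_(i < k) [set x in codom (phi i)].

Lemma card_packing_support k phi : #|@packing_support k phi| <= k * m.
Proof.
apply: leq_trans (leq_card_bigcup _ _) _; rewrite -[k in k * _]card_ord -sum_nat_const.
by apply: leq_sum => i _; rewrite cardsE (leq_trans (card_size _)) // size_codom card_ord.
Qed.

Lemma packing_size_le k phi : 0 < m -> @packing k phi -> k <= n.
Proof.
move=> m_gt0 [_ disj]; pose x0 : 'I_m := Ordinal m_gt0.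
have inj : injective (fun i => phi i x0).
  move=> i j /= eq_ij; apply/eqP/negPn/negP => /disj/disjointFr/(_ (codom_f _ x0)).
  by rewrite eq_ij codom_f.
by have := leq_card _ inj; rewrite !card_ord.
Qed.

Lemma has_disjoint_copies_le k l : k <= l -> has_disjoint_copies l F H -> has_disjoint_copies k F H.
Proof.
move=> le_kl [phi [copy disj]]; exists (fun i => phi (widen_ord le_kl i)); split=> // i j.
by move=> neq_ij; apply: disj; apply: contra neq_ij => /eqP/(congr1 val)/eqP.
Qed.

Lemma packing_extend k phi psi : @packing k phi -> is_copy F H psi ->
  (forall x, psi x \notin packing_support phi) -> has_disjoint_copies k.+1 F H.
Proof.
move=> [copy disj] copy_psi psi_out.
have psi_disj i : [disjoint codom (phi i) & codom psi].
  rewrite disjoint_sym disjoint_subset; apply/subsetP => _ /codomP[x ->].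
  by rewrite inE; apply: contra (psi_out x) => ?; apply/bigcupP; exists i; rewrite ?inE.
exists (fun i => if unlift ord_max i is Some j then phi j else psi); split.
  by move=> i; case: unliftP.
move=> i j neq_ij; case: unliftP => [a ei|ei]; case: unliftP => [b ej|ej] //.
- by apply: disj; apply: contra neq_ij => /eqP eq_ab; rewrite ei ej eq_ab.
- by rewrite disjoint_sym psi_disj.
- by rewrite ei ej eqxx in neq_ij.
Qed.

Lemma exists_maximal_packing t : 0 < m -> m <= n -> ~ has_disjoint_copies t.+1 F H ->
  exists k (phi : 'I_k -> {ffun 'I_m -> 'I_n}), [/\ k <= t, packing phi &
    forall psi, is_copy F H psi -> exists x, psi x \in packing_support phi].
Proof.
move=> m_gt0 le_mn no_packing.
(* [has_disjoint_copies] is a Prop; decide it classically to take the largest packing. *)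
pose P k := if excluded_middle_informative (has_disjoint_copies k F H) then true else false.
have PP k : reflect (has_disjoint_copies k F H) (P k).
  by rewrite /P; case: excluded_middle_informative => ?; constructor.
have P0 : exists k, P k.
  by exists 0; apply/PP; exists (fun _ => [ffun x => widen_ord le_mn x]); split; case.
have P_bounded k : P k -> k <= n by move/PP=> [phi]; apply: packing_size_le.
have [k /PP[phi packing_phi] k_max] := ex_maxnP P0 P_bounded.
exists k, phi; split=> //.
  rewrite leqNgt; apply/negP => lt_tk; apply: no_packing.
  by apply: has_disjoint_copies_le lt_tk _; exists phi.
move=> psi copy_psi.
have [/existsP //|/existsPn psi_out] := boolP [exists x, psi x \in packing_support phi].
have := k_max k.+1 (introT (PP _) (packing_extend packing_phi copy_psi psi_out)).
by rewrite ltnn.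
Qed.

End Packings.

Lemma edge_count_le n m r t u D : 0 < r -> 0 < m -> t <= n -> u <= n -> u <= t * m ->
  m * D <= 'C(n - t, r.-1) ->
  u * D + ('C(n - u, r) - 'C(n - maxn u t, r)) <= 'C(n, r) - 'C(n - t, r).
Proof.
case: r => // j _ m_gt0 le_tn le_un le_u_tm; rewrite succnK => mD.
have [le_ut | lt_tu] := leqP u t.
  have uD : u * D <= u * 'C(n - u, j).
    apply: (@leq_trans (u * (m * D))); first by rewrite mulnCA leq_pmull.
    by rewrite leq_mul2l (leq_trans mD) ?orbT // leq_bin2l ?leq_sub2l.
  have := bin_sub_mul_le j le_un; have : 'C(n - t, j.+1) <= 'C(n - u, j.+1).
    by rewrite leq_bin2l ?leq_sub2l.
  lia.
rewrite subnn addn0.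
have uD : u * D <= t * 'C(n - t, j).
  apply: (@leq_trans (t * (m * D))); first by rewrite mulnA leq_mul2r le_u_tm orbT.
  by rewrite leq_mul2l mD orbT.
have := bin_sub_mul_le j le_tn; lia.
Qed.

Lemma card_le_of_maxdeg n m r t (H : hypergraph n) :
  1 < r -> 1 < m -> 0 < t -> t * m <= n -> n < t * m + m -> uniform r H ->
  m * maxdeg H <= 'C(n.-1, r.-1) -> #|H| <= 'C(n, r) - 'C(n - t, r).
Proof.
case: r => // j r_gt1 m_gt1 t_gt0 le_tm_n lt_n_tm unifH; rewrite succnK => mD.
have mH : m * #|H| <= 'C(n, j.+1).
  rewrite -(@leq_pmul2l j.+1) // mulnCA -mul_bin_diag.
  apply: (@leq_trans (m * (n * maxdeg H))); first by rewrite leq_mul2l mul_card_le_maxdeg ?orbT.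
  by rewrite mulnCA leq_mul2l mD orbT.
have ratio := bin_ratio_le r_gt1 m_gt1 t_gt0 le_tm_n lt_n_tm.
have : m * (#|H| + 'C(n - t, j.+1)) <= m * 'C(n, j.+1).
  by rewrite mulnDr -[m in m * 'C(n, _)](prednK (ltnW m_gt1)) mulSn leq_add.
rewrite leq_pmul2l ?(ltnW m_gt1) //; lia.
Qed.

Lemma card_le_of_copy_transversal n m r t (F : hypergraph m) (H : hypergraph n)
    (U : {set 'I_n}) :
  0 < r -> 0 < m -> t <= n -> #|U| + m <= n -> #|U| <= t * m -> uniform r H ->
  m * maxdeg H <= 'C(n - t, r.-1) ->
  (forall psi, is_copy F H psi -> exists x, psi x \in U) ->
  #|H| <= 'C(n, r) - 'C(n - t, r) + ex r (n - t) F.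
Proof.
move=> r_gt0 m_gt0 le_tn le_Um_n le_U_tm unifH mD transversal.
have [X sUX cardX] : exists2 X : {set 'I_n}, U \subset X & #|X| = maxn #|U| t.
  by apply: exists_superset; rewrite leq_maxl card_ord geq_max le_tn; lia.
have [W sWX cardW] : exists2 W : {set 'I_n}, W \subset X & #|W| = t.
  by apply: exists_subset; rewrite cardX leq_maxr.
set H3 := [set e in H | e \subset ~: X].
have sH3X e : e \in H3 -> e \subset ~: X by rewrite inE => /andP[].
have sH3H : H3 \subset H by apply/subsetP => e; rewrite inE => /andP[].
have no_copy psi : ~~ is_copy F H3 psi.
  apply/negP => copy_psi.
  have sH3U e : e \in H3 -> e \subset ~: U.
    by move/sH3X/subset_trans; apply; rewrite setCS.
  have le_mU : m <= #|~: U| by rewrite [#|~: U|]cardsCs setCK card_ord; lia.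
  have [psi' copy_psi' psi'_in] := copy_inside sH3U le_mU copy_psi.
  have [x] := transversal psi' (is_copyS sH3H copy_psi').
  by have := psi'_in x; rewrite inE => /negbTE ->.
have le_H3 : #|H3| <= ex r (n - t) F.
  apply: (card_le_ex (Y := ~: W)) no_copy.
  - by rewrite [#|~: W|]cardsCs setCK card_ord cardW.
  - exact: uniformS sH3H unifH.
  - by move=> e /sH3X /subset_trans; apply; rewrite setCS.
apply: leq_trans (card_edges_split H U X) (leq_add _ le_H3).
apply: leq_trans (leq_add (card_edges_meeting_le H U) (card_edges_between_le unifH sUX)) _.
rewrite cardX; apply: (edge_count_le r_gt0 m_gt0 le_tn _ le_U_tm mD); lia.
Qed.

Local Open Scope ring_scope.

Theorem lemma3p1 (R : realFieldType) (n m r t : nat) (delta : R)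
  (F : hypergraph m) (H : hypergraph n) :
  (2 <= r)%N -> (r <= m)%N -> (m <= n)%N ->
  0 <= delta -> delta <= 1 / m%:R ->
  uniform r F ->
  (0 < t)%N ->
  t%:R <= delta * m%:R * n%:R / (r.-1)%:R - r%:R ->
  t%:R <= n%:R / m%:R :> R ->
  uniform r H ->
  ~ has_disjoint_copies t.+1 F H ->
  (maxdeg H)%:R <= (1 / m%:R - delta) * ('C(n.-1, r.-1))%:R ->
  (#|H| <= 'C(n, r) - 'C(n - t, r) + ex r (n - t) F)%N.
Proof.
move=> r_gt1 le_rm le_mn delta_ge0 delta_le _ t_gt0 t_le t_le_nm unifH no_packing maxdegH.
have m_gt1 : (1 < m)%N := leq_trans r_gt1 le_rm.
have m_gt0 := ltnW m_gt1.
have le_tm_n : (t * m <= n)%N by rewrite -(ler_nat R) natrM -ler_pdivlMr ?ltr0n.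
have le_tn : (t <= n)%N := leq_trans (leq_pmulr t m_gt0) le_tm_n.
have mD := mul_maxdeg_le_bin r_gt1 m_gt0 t_gt0 le_tn delta_ge0 delta_le t_le maxdegH.
have [k [phi [le_kt _ transversal]]] := exists_maximal_packing m_gt0 le_mn no_packing.
have le_U_tm : (#|packing_support phi| <= t * m)%N.
  exact: leq_trans (card_packing_support phi) (leq_mul le_kt (leqnn m)).
have [lt_n_Um | le_Um_n] := ltnP n (#|packing_support phi| + m).
  apply: leq_trans (leq_addr _ _); apply: (@card_le_of_maxdeg n m) => //; first lia.
  by apply: leq_trans mD _; rewrite leq_bin2l // -subn1 leq_sub2l.
exact: card_le_of_copy_transversal (ltnW r_gt1) m_gt0 le_tn le_Um_n le_U_tm unifH mD transversal.
Qed.
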